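(* Let $\alpha,\beta$ be relatively prime positive integers, let $n$ be a positive integer with $s=s(n)>2$, and let $(b,a)$ be an $n$-good pair. Then: (a) $a-\alpha b-\ell g_s$ is not a positive multiple of $\beta$ for any integer $\ell\ge0$; (b) a pair $(b',a')$ is $n$-good if and only if there exists $k\in\mathbb{Z}$ such that $a'=a+k\beta g_{s-2}\ge1$ and $b'=b-kg_{s-1}\ge1$; (c) with $a',b',k$ as in (b), $w_{s+1}(b',a')-w_{s+1}(b,a)=k(-\beta)^{s-1}$.
   Context: The $(\alpha,\beta)$-walk $w_k(a_1,a_2)$ for positive integers $a_1,a_2$ is given by $w_1=a_1$, $w_2=a_2$, $w_{k+2}=\alpha w_{k+1}+\beta w_k$ ($k\ge1$). For a positive integer $n$, $s(n;a_1,a_2)$ is the (largest) index $s$ with $w_s(a_1,a_2)=n$ ($-\infty$ if none), and $s(n)=\max_{a_1,a_2\ge1}s(n;a_1,a_2)$. A pair $(a_1,a_2)$ with $a_1,a_2\ge1$ is $n$-good if $s(n;a_1,a_2)=s(n)$. The sequence $g_k$: $g_1=1$, $g_2=\alpha$, $g_{k+2}=\alpha g_{k+1}+\beta g_k$ for $k\ge1$. *)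

From mathcomp Require Import all_boot all_order all_algebra.
Set Implicit Arguments. Unset Strict Implicit. Unset Printing Implicit Defensive.
Import Order.TTheory GRing.Theory Num.Theory.

(* (alpha,beta)-walk. [wpair al be a1 a2 k] = (w_{k+1}, w_{k+2}). *)
Fixpoint wpair (al be a1 a2 k : nat) : nat * nat :=
  match k with
  | 0 => (a1, a2)
  | k'.+1 => let p := wpair al be a1 a2 k' in (p.2, al * p.2 + be * p.1)
  end.

(* w_k(a1,a2), indices k >= 1 (w 1 = a1, w 2 = a2,
   w (k+2) = al * w (k+1) + be * w k).  The value at k = 0 is a dummy. *)
Definition w (al be a1 a2 k : nat) : nat := (wpair al be a1 a2 k.-1).1.

Definition g (al be k : nat) : nat := w al be 1 al k.

(* "s is the largest index (>= 1) with w_s(a1,a2) = n", i.e. s(n;a1,a2) = s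
   (s(n;a1,a2) = -oo corresponds to no s satisfying this). *)
Definition sidx (al be n a1 a2 s : nat) : Prop :=
  1 <= s /\ w al be a1 a2 s = n /\
  forall k, 1 <= k -> w al be a1 a2 k = n -> k <= s.

Definition s_of (al be n s : nat) : Prop :=
  (exists a1 a2, 1 <= a1 /\ 1 <= a2 /\ sidx al be n a1 a2 s) /\
  (forall a1 a2 t, 1 <= a1 -> 1 <= a2 -> sidx al be n a1 a2 t -> t <= s).

Definition good (al be n s a1 a2 : nat) : Prop :=
  1 <= a1 /\ 1 <= a2 /\ sidx al be n a1 a2 s.

From mathcomp Require Import all_boot all_order all_algebra.
From mathcomp Require Import zify ring.
Set Implicit Arguments. Unset Strict Implicit. Unset Printing Implicit Defensive.
Import Order.TTheory GRing.Theory Num.Theory.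

(* Let U be the Lucas sequence U_0 = 0, U_1 = 1, U_(k+2) = alpha U_(k+1) +
   beta U_k, so that g_k = U_k for k >= 1.  Every walk is linear in its
   starting pair: w_(j+2)(b,a) = beta b U_j + a U_(j+1), and it is strictly
   increasing from its second term on.  Hence (b',a') is n-good iff
   beta b' U_(s-2) + a' U_(s-1) = n; as U_(s-1) is coprime to beta U_(s-2),
   the solutions are the pairs (b - k U_(s-1), a + k beta U_(s-2)), and
   Cassini's identity U_(j+2) U_j - U_(j+1)^2 = -(-beta)^j measures how they
   move w_(s+1).  For (a), a = alpha b + l g_s + beta m with m > 0 would make
   (m, b + l g_(s-1)) a walk reaching n at index s+1 > s(n). *)

Lemma nat_ind2 (P : nat -> Prop) :
  P 0 -> P 1 -> (forall k, P k -> P k.+1 -> P k.+2) -> forall k, P k.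
Proof.
move=> P0 P1 PSS k; suff [] : P k /\ P k.+1 by [].
by elim: k => [|k [Pk Pk1]]; split=> //; apply: PSS.
Qed.

Section LucasSequence.
Variables al be : nat.

Lemma wSS a1 a2 k :
  w al be a1 a2 k.+3 = al * w al be a1 a2 k.+2 + be * w al be a1 a2 k.+1.
Proof. by []. Qed.

Definition lucasU k := w al be 0 1 k.+1.

Lemma lucasU0 : lucasU 0 = 0. Proof. by []. Qed.
Lemma lucasU1 : lucasU 1 = 1. Proof. by []. Qed.
Lemma lucasUSS k : lucasU k.+2 = al * lucasU k.+1 + be * lucasU k.
Proof. exact: wSS. Qed.

Lemma w_lucasU b a j : w al be b a j.+2 = be * b * lucasU j + a * lucasU j.+1.
Proof.
elim/nat_ind2: j => [||j IHj IHj1].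
- by rewrite lucasU0 lucasU1 muln0 muln1.
- by rewrite wSS lucasUSS lucasU1 lucasU0 /=; ring.
- by rewrite wSS IHj1 IHj !lucasUSS; ring.
Qed.

Lemma w_prepend m b l j :
  w al be m (b + l * lucasU j.+1) j.+3
  = w al be b (al * b + l * lucasU j.+2 + be * m) j.+2.
Proof. by rewrite !w_lucasU !lucasUSS; ring. Qed.

Lemma g_lucasU k : 0 < k -> g al be k = lucasU k.
Proof. by case: k => [|[|k]] // _; rewrite /g w_lucasU lucasUSS; ring. Qed.

Lemma lucasU_gt0 k : 0 < al -> 0 < lucasU k.+1.
Proof.
move=> al_gt0; elim/nat_ind2: k => [||k _ IHk1] //.
- by rewrite lucasUSS lucasU1 lucasU0; lia.
- by rewrite lucasUSS; nia.
Qed.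

Hypothesis co_al_be : coprime al be.

Lemma coprime_lucasU_be k : coprime (lucasU k.+1) be.
Proof.
elim: k => [|k IHk]; first by rewrite lucasU1 coprime1n.
rewrite coprime_sym lucasUSS addnC mulnC /coprime gcdnMDl -/(coprime be _).
by rewrite coprimeMr; apply/andP; split; rewrite coprime_sym.
Qed.

Lemma coprime_lucasUS k : coprime (lucasU k.+1) (be * lucasU k).
Proof.
elim: k => [|k IHk]; first by rewrite lucasU1 coprime1n.
by rewrite coprimeMr coprime_lucasU_be /= lucasUSS coprime_sym /coprime gcdnMDl.
Qed.

End LucasSequence.

Section Monotonicity.
Variables al be : nat.
Hypotheses (al_gt0 : 0 < al) (be_gt0 : 0 < be).

Lemma w_gt0 a1 a2 k : 0 < a1 -> 0 < a2 -> 0 < w al be a1 a2 k.+1.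
Proof. by move=> a1_gt0 a2_gt0; elim/nat_ind2: k => [||k _ IHk1] //; rewrite wSS; nia. Qed.

Lemma w_ltS a1 a2 k : 0 < a1 -> 0 < a2 -> w al be a1 a2 k.+2 < w al be a1 a2 k.+3.
Proof. by move=> a1_gt0 a2_gt0; have := w_gt0 k a1_gt0 a2_gt0; rewrite wSS; nia. Qed.

Lemma sidx_w a1 a2 s : 0 < a1 -> 0 < a2 -> 1 < s ->
  sidx al be (w al be a1 a2 s) a1 a2 s.
Proof.
move=> a1_gt0 a2_gt0; case: s => [|[|s]] // _; split=> //; split=> // k k_gt0.
case: k k_gt0 => [|[|k]] // _ /eqP; apply: contraTT; rewrite -ltnNge !ltnS => lt_sk.
have w_incr := homo_ltn ltn_trans (fun i => w_ltS i a1_gt0 a2_gt0).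
by rewrite neq_ltn (w_incr s k lt_sk) orbT.
Qed.

Lemma s_of_max n s a1 a2 t : s_of al be n s -> 0 < a1 -> 0 < a2 -> 1 < t ->
  w al be a1 a2 t = n -> t <= s.
Proof.
move=> [_ s_max] a1_gt0 a2_gt0 t_gt1 w_t; apply: (s_max a1 a2) => //.
by rewrite -w_t; apply: sidx_w.
Qed.

End Monotonicity.

Local Open Scope ring_scope.

Section Shifts.
Variables al be : nat.
Local Notation U := (lucasU al be).

Lemma lucasU_cassini j :
  (U j.+2)%:Z * (U j)%:Z - (U j.+1)%:Z ^+ 2 = - (- be%:Z) ^+ j.
Proof.
elim: j => [|j IHj]; first by rewrite lucasU0 lucasU1 expr0 mulr0 expr1n sub0r.
rewrite [(- _) ^+ _.+1]exprS -[(- be%:Z) ^+ j]opprK -IHj.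
by rewrite (lucasUSS _ _ j.+1) (lucasUSS _ _ j) !PoszD !PoszM; ring.
Qed.

Section KernelShift.
Variables (b a b' a' : nat) (k : int) (j : nat).
Hypotheses (def_a' : a'%:Z = a%:Z + k * be%:Z * (U j)%:Z)
           (def_b' : b'%:Z = b%:Z - k * (U j.+1)%:Z).

Lemma w_shift : w al be b' a' j.+2 = w al be b a j.+2.
Proof.
apply/eqP; rewrite -eqz_nat !w_lucasU !PoszD !PoszM def_a' def_b'.
by apply/eqP; ring.
Qed.

Lemma w_shiftS :
  (w al be b' a' j.+3)%:Z - (w al be b a j.+3)%:Z = k * (- be%:Z) ^+ j.+1.
Proof.
rewrite !w_lucasU !PoszD !PoszM def_a' def_b' exprS -[(- be%:Z) ^+ j]opprK.
by rewrite -lucasU_cassini; ring.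
Qed.

End KernelShift.

Lemma w_eq_shift (b a b' a' j : nat) : coprime al be -> (0 < al)%N ->
  w al be b' a' j.+2 = w al be b a j.+2 ->
  exists k : int, a'%:Z = a%:Z + k * be%:Z * (U j)%:Z /\
                  b'%:Z = b%:Z - k * (U j.+1)%:Z.
Proof.
move=> co_al_be al_gt0 /eqP; rewrite -eqz_nat !w_lucasU !PoszD !PoszM => /eqP w_eq.
have /dvdzP[k def_b] : (U j.+1 %| b%:Z - b'%:Z)%Z.
  rewrite -(@Gauss_dvdzr _ (be * U j)%N) ?coprimezE ?coprime_lucasUS //.
  by apply/dvdzP; exists (a'%:Z - a%:Z); rewrite PoszM; lia.
exists k; split; last by lia.
have U_neq0 : (U j.+1)%:Z != 0 by rewrite eqz_nat -lt0n lucasU_gt0.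
apply: (mulIf U_neq0); nia.
Qed.

End Shifts.

Theorem lemma2p4 (al be n s b a : nat) :
  (0 < al)%N -> (0 < be)%N -> coprime al be -> (0 < n)%N ->
  s_of al be n s -> (2 < s)%N -> good al be n s b a ->
  (* (a) *)
  (forall l : nat, ~ (exists m : nat, (0 < m)%N /\
      (a%:Z - (al * b)%:Z - (l * g al be s)%:Z = (be * m)%:Z))) /\
  (* (b) *)
  (forall b' a' : nat, good al be n s b' a' <->
     exists k : int,
       a'%:Z = a%:Z + k * be%:Z * (g al be (s - 2))%:Z /\ (1 <= a')%N /\
       b'%:Z = b%:Z - k * (g al be (s - 1))%:Z /\ (1 <= b')%N) /\
  (* (c) *)
  (forall (b' a' : nat) (k : int),
     a'%:Z = a%:Z + k * be%:Z * (g al be (s - 2))%:Z -> (1 <= a')%N ->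
     b'%:Z = b%:Z - k * (g al be (s - 1))%:Z -> (1 <= b')%N ->
     (w al be b' a' s.+1)%:Z - (w al be b a s.+1)%:Z
       = k * (- be%:Z) ^+ (s - 1)).
Proof.
move=> al_gt0 be_gt0 co_al_be _ s_n s_gt2 [b_gt0 [a_gt0 [_ [w_ba _]]]].
have [j def_s] : exists j, s = j.+3 by exists (s - 3)%N; lia.
subst s; rewrite !subSS !subn0 !g_lucasU //.
split; [|split].
- move=> l [m [m_gt0 def_a]].
  have b_l_gt0 : (0 < b + l * lucasU al be j.+2)%N by lia.
  have def_a_nat : a = (al * b + l * lucasU al be j.+3 + be * m)%N by lia.
  have := s_of_max al_gt0 be_gt0 s_n m_gt0 b_l_gt0 (isT : (1 < j.+4)%N).
  by rewrite w_prepend -def_a_nat w_ba ltnn => /(_ erefl).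
- move=> b' a'; split.
  + move=> [b'_gt0 [a'_gt0 [_ [w_b'a' _]]]].
    have [k [def_a' def_b']] := w_eq_shift co_al_be al_gt0 (etrans w_b'a' (esym w_ba)).
    by exists k.
  + move=> [k [def_a' [a'_gt0 [def_b' b'_gt0]]]].
    by do 2!split=> //; rewrite -w_ba -(w_shift def_a' def_b'); apply: sidx_w.
- by move=> b' a' k def_a' _ def_b' _; apply: w_shiftS.
Qed.
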